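(* Let $\Sigma$ be an alphabet with $|\Sigma|\ge 3$. A function $f\colon\Sigma^*\to\Sigma^*$ is RCP if and only if there exist $n\in\mathbb{N}$ and words $w_0,\ldots,w_n\in\Sigma^*$ such that $f(x)=w_0xw_1x\cdots w_{n-1}xw_n$ for all $x\in\Sigma^*$.
   Context: $\Sigma^*$ denotes the free monoid over $\Sigma$: finite words over $\Sigma$ with concatenation, unit the empty word $\varepsilon$. A restricted congruence on $\Sigma^*$ is the kernel $\{(u,v)\mid \varphi(u)=\varphi(v)\}$ of a monoid morphism $\varphi\colon\Sigma^*\to\Sigma^*$. A function $f\colon(\Sigma^* )^k\to\Sigma^*$ is RCP if it preserves every restricted congruence, i.e. for every monoid morphism $\varphi\colon\Sigma^*\to\Sigma^*$ and all $u_1,\ldots,u_k,v_1,\ldots,v_k\in\Sigma^*$ with $\varphi(u_i)=\varphi(v_i)$ for all $i$, we have $\varphi(f(u_1,\ldots,u_k))=\varphi(f(v_1,\ldots,v_k))$. *)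

From mathcomp Require Import all_boot.
Set Implicit Arguments. Unset Strict Implicit. Unset Printing Implicit Defensive.

Definition monoid_morphism (Sigma : Type) (phi : seq Sigma -> seq Sigma) : Prop :=
  phi [::] = [::] /\ forall u v : seq Sigma, phi (u ++ v) = phi u ++ phi v.

Definition RCP (Sigma : Type) (f : seq Sigma -> seq Sigma) : Prop :=
  forall phi : seq Sigma -> seq Sigma, monoid_morphism phi ->
  forall u v : seq Sigma, phi u = phi v -> phi (f u) = phi (f v).

(* w_0 x w_1 x ... w_{n-1} x w_n, for ws = [:: w_0; ...; w_n] (nonempty). *)
Fixpoint interleave (Sigma : Type) (w0 : seq Sigma) (ws : seq (seq Sigma))
  (x : seq Sigma) : seq Sigma :=
  match ws with
  | [::] => w0
  | w1 :: ws' => w0 ++ x ++ interleave w1 ws' x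
  end.

From Pilot Require Import Defs.
From mathcomp Require Import all_boot.
Set Implicit Arguments. Unset Strict Implicit. Unset Printing Implicit Defensive.

(* Morphisms distribute over [interleave], which gives one direction.
   Conversely, let a, b, c be distinct letters and W := f [:: c].  For a
   c-free word x, plugging x for c identifies x with [:: c], and collapsing
   every letter other than c to a identifies x with every c-free word of the
   same length.  Comparing f (a b^n) with f (b a^n) through these morphisms
   shows that f (a b^n) is W with some of its c's replaced by a b^n, and the
   same choice of c's then works for every c-free word of length n + 1.
   Erasing b identifies a b^n with a, so the choice does not depend on n.
   Finally, the projections onto two letters d, e separate words, and the
   projection of f x is that of f applied to the projection of x, a word
   avoiding the third letter, for which the same argument applies. *)

Lemma catl_inj (T : Type) (s t1 t2 : seq T) : s ++ t1 = s ++ t2 -> t1 = t2.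
Proof. by elim: s => // x s IH [] /IH. Qed.

Lemma three_distinct (T : finType) : 2 < #|T| ->
  exists a b c : T, [/\ a != b, a != c & b != c].
Proof.
rewrite cardE; have := enum_uniq T.
case: (enum T) => [|a [|b [|c s]]] //= /andP [Ha /andP [Hb _]] _.
move: Ha Hb; rewrite !inE !negb_or => /andP [ab /andP [ac _]] /andP [bc _].
by exists a, b, c.
Qed.

Lemma avoid_two (T : eqType) (a b c d e : T) : a != b -> a != c -> b != c ->
  exists2 h, h \in [:: a; b; c] & (h != d) && (h != e).
Proof.
move=> ab ac bc.
have [ade|ade] := boolP ((a != d) && (a != e)); first by exists a; rewrite ?mem_head.
have [bde|bde] := boolP ((b != d) && (b != e)).
  by exists b; rewrite ?inE ?eqxx ?orbT.
exists c; first by rewrite !inE eqxx !orbT.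
move: ade bde; rewrite !negb_and !negbK => /orP [] /eqP ? /orP [] /eqP ?; subst;
  by rewrite ?eqxx in ab; rewrite !(eq_sym c) ?ac ?bc.
Qed.

Section WordMorphisms.

Variable S : eqType.
Implicit Types (m : S -> seq S) (t : S) (u v x y F G : seq S).

Definition hom m u := flatten (map m u).

Lemma hom_cons m t u : hom m (t :: u) = m t ++ hom m u.
Proof. by []. Qed.

Lemma hom_cat m u v : hom m (u ++ v) = hom m u ++ hom m v.
Proof. by rewrite /hom map_cat flatten_cat. Qed.

Lemma hom1 m t : hom m [:: t] = m t.
Proof. exact: cats0. Qed.

Lemma hom_monoid_morphism m : Defs.monoid_morphism (hom m).
Proof. by split=> //; apply: hom_cat. Qed.

Lemma eq_in_hom m1 m2 u : {in u, m1 =1 m2} -> hom m1 u = hom m2 u.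
Proof. by move/eq_in_map; rewrite /hom => ->. Qed.

Lemma hom_id_in m u : {in u, forall t, m t = [:: t]} -> hom m u = u.
Proof. by move/eq_in_hom->; apply: flatten_seq1. Qed.

Lemma hom_comp m1 m2 u : hom m1 (hom m2 u) = hom (fun t => hom m1 (m2 t)) u.
Proof. by elim: u => // t u IH; rewrite !hom_cons hom_cat IH. Qed.

Definition collapse c g t : seq S := [:: if t == c then c else g].
Definition plug c x t : seq S := if t == c then x else [:: t].
Definition erase b t : seq S := if t == b then [::] else [:: t].
Definition keep2 d e t : seq S := if (t == d) || (t == e) then [:: t] else [::].

Lemma hom_collapse_free c g x : c \notin x -> hom (collapse c g) x = nseq (size x) g.
Proof.
elim: x => // t x IH; rewrite inE negb_or => /andP [ct cx].
by rewrite hom_cons IH // /collapse eq_sym (negbTE ct).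
Qed.

Lemma collapse_cons c g t1 t2 F G : g != c ->
  hom (collapse c g) (t1 :: F) = hom (collapse c g) (t2 :: G) ->
  (t1 == c) = (t2 == c) /\ hom (collapse c g) F = hom (collapse c g) G.
Proof.
move=> gc; rewrite !hom_cons /collapse => -[E ->]; split=> //.
by move: E; do 2 case: eqP => //; move=> _ _ E; rewrite E eqxx in gc.
Qed.

Lemma hom_plug_free c y x : c \notin x -> hom (plug c y) x = x.
Proof.
by move=> cx; apply: hom_id_in => t tx; rewrite /plug; case: eqP tx cx => // -> ->.
Qed.

Lemma hom_plug_hole c y : hom (plug c y) [:: c] = y.
Proof. by rewrite hom1 /plug eqxx. Qed.

Lemma collapse_plug_inj c g y F G : g != c ->
  hom (collapse c g) F = hom (collapse c g) G -> hom (plug c y) F = hom (plug c y) G ->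
  F = G.
Proof.
move=> gc; elim: F G => [|t1 F IH] [|t2 G] //; try by rewrite hom_cons.
move=> /(collapse_cons gc) [E HK]; rewrite !hom_cons /plug -E.
have [t1c|_] := eqVneq t1 c; last by case=> -> /(IH _ HK) ->.
move: E; rewrite t1c eqxx => /esym/eqP ->.
by move/catl_inj/(IH _ HK) ->.
Qed.

(* The plugged word starts with a letter that does not occur in p, so no
   hole can be met while reading p. *)
Lemma plug_prefix c s x p F V : s \notin p ->
  hom (plug c (s :: x)) F = p ++ V ->
  exists2 F', F = p ++ F' & hom (plug c (s :: x)) F' = V.
Proof.
elim: p F => [|r p IH] F; first by exists F.
rewrite inE negb_or => /andP [sr sp]; case: F => [|t F] //.
rewrite hom_cons /plug; case: eqP => [_ [E]|_ [<- /IH [] // F' -> HF']].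
  by rewrite E eqxx in sr.
by exists F'.
Qed.

Lemma plug_slot c s p t F V : t != c -> s \notin p ->
  hom (plug c (s :: p)) (t :: F) = (s :: p) ++ V ->
  exists2 F', t :: F = (s :: p) ++ F' & hom (plug c (s :: p)) F' = V.
Proof.
move=> tc sp; rewrite hom_cons /plug (negbTE tc) => -[->] /plug_prefix [] // F' -> HF'.
by exists F'.
Qed.

Lemma hom_erase_nseq b n : hom (erase b) (nseq n b) = [::].
Proof. by elim: n => // n IH; rewrite /= hom_cons IH /erase eqxx. Qed.

Lemma mem_hom_keep2 d e t x : t \in hom (keep2 d e) x -> (t == d) || (t == e).
Proof.
elim: x => // s x IH; rewrite hom_cons mem_cat => /orP [|/IH //].
by rewrite /keep2; case: ifP => // dse; rewrite inE => /eqP ->.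
Qed.

Lemma hom_keep2_idem d e x : hom (keep2 d e) (hom (keep2 d e) x) = hom (keep2 d e) x.
Proof. by apply: hom_id_in => t /mem_hom_keep2; rewrite /keep2 => ->. Qed.

Lemma hom_keep2_erase d e h u : h != d -> h != e ->
  hom (keep2 d e) (hom (erase h) u) = hom (keep2 d e) u.
Proof.
move=> hd he; rewrite hom_comp; apply: eq_in_hom => t _; rewrite /erase.
by case: eqP => [->|_]; rewrite ?hom1 // /keep2 (negbTE hd) (negbTE he).
Qed.

Lemma keep2_inj u v : (forall d e, hom (keep2 d e) u = hom (keep2 d e) v) -> u = v.
Proof.
elim: u v => [|t u IH] [|s v] H //.
- by move: (H s s); rewrite hom_cons /keep2 eqxx.
- by move: (H t t); rewrite hom_cons /keep2 eqxx.
have [ts|ts] := eqVneq t s; first subst s.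
  by congr (_ :: _); apply: IH => d e; move: (H d e); rewrite !hom_cons => /catl_inj.
move: (H t s); rewrite !hom_cons /keep2 !eqxx orbT /= => -[ts'].
by rewrite ts' eqxx in ts.
Qed.

End WordMorphisms.

(* A template is a word whose holes [None] are all filled with the same word. *)
Definition fill (T : Type) (tau : seq (option T)) (x : seq T) : seq T :=
  flatten [seq oapp (fun d => [:: d]) x o | o <- tau].

Lemma fill_cons (T : Type) (o : option T) tau x :
  fill (o :: tau) x = oapp (fun d => [:: d]) x o ++ fill tau x.
Proof. by []. Qed.

Lemma fill_interleave (T : Type) (tau : seq (option T)) :
  exists n (w : nat -> seq T), forall x,
    fill tau x = interleave (w 0) [seq w i.+1 | i <- iota 0 n] x.
Proof.
elim: tau => [|[d|] tau [n [w IH]]]; first by exists 0, (fun _ => [::]).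
  exists n, (fun i => if i is 0 then d :: w 0 else w i) => x.
  by rewrite fill_cons IH; case: (iota 0 n).
exists n.+1, (fun i => if i is i'.+1 then w i' else [::]) => x.
by rewrite fill_cons IH /= (iotaDl 1 0) -map_comp.
Qed.

Lemma interleave_RCP (T : Type) (w0 : seq T) ws : RCP (interleave w0 ws).
Proof.
move=> phi [_ phiD] u v Huv; elim: ws w0 => //= w1 ws IH w0.
by rewrite !phiD Huv IH.
Qed.

Section Templates.

Variable S : eqType.
Implicit Types (m : S -> seq S) (tau : seq (option S)) (x y W : seq S).

Lemma hom_fill_eq m tau x y :
  hom m x = hom m y -> hom m (fill tau x) = hom m (fill tau y).
Proof.
by move=> hxy; elim: tau => // [[d|]] tau IH; rewrite fill_cons !hom_cat IH ?hxy.
Qed.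

(* The i-th bit of M turns the i-th letter of W into a hole if it is c. *)
Fixpoint mark (c : S) W (M : seq bool) : seq (option S) :=
  if W is w :: W' then
    (if (w == c) && head false M then None else Some w) :: mark c W' (behead M)
  else [::].

Lemma fill_mark_hole c W M : fill (mark c W M) [:: c] = W.
Proof.
elim: W M => // w W IH M; rewrite /= fill_cons IH.
by case: ifP => //= /andP [/eqP -> _].
Qed.

Lemma mark_inj a b c W M M' : a != b -> a != c -> c != b ->
  hom (erase b) (fill (mark c W M) [:: a]) = hom (erase b) (fill (mark c W M') [:: a]) ->
  mark c W M = mark c W M'.
Proof.
move=> ab ac cb; elim: W M M' => // w W IH M M'.
rewrite /= !fill_cons !hom_cat.
have ea : hom (erase b) [:: a] = [:: a] by rewrite hom1 /erase (negbTE ab).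
have ec : hom (erase b) [:: c] = [:: c] by rewrite hom1 /erase (negbTE cb).
have [->|_] /= := eqVneq w c; last by move/catl_inj/IH->.
do 2 case: (head false _); rewrite /= ?ea ?ec;
  by [move/catl_inj/IH->|case=> E; rewrite E eqxx in ac].
Qed.

Section Decode.

Variables (c g s t : S) (p q : seq S).
Hypotheses (gc : g != c) (st : s != t) (sp : s \notin p) (tq : t \notin q).
Hypotheses (cs : c \notin s :: p) (ct : c \notin t :: q) (spq : size p = size q).

Lemma decode_mark W F G :
  hom (collapse c g) F = hom (collapse c g) G ->
  hom (plug c (s :: p)) F = hom (plug c (s :: p)) W ->
  hom (plug c (t :: q)) G = hom (plug c (t :: q)) W ->
  exists M, G = fill (mark c W M) (t :: q).
Proof.
elim: W F G => [|w W IH] F [|v G] HK H2 H3; first by exists [::].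
- by move: H3; rewrite hom_cons /plug; case: eqP.
- by move: H3; rewrite hom_cons /plug; case: eqP.
case: F HK H2 => [|u F] HK H2; first by move: HK; rewrite hom_cons.
have [E HK'] := collapse_cons gc HK.
move: H2 H3; rewrite ![hom _ (w :: W)]hom_cons.
have [vc|vc] := eqVneq v c.
  move: E; rewrite vc eqxx => /eqP ->; rewrite !hom_cons /plug !eqxx.
  case: eqP => [->|_] /=; last by case=> <- _ [] E; move: st; rewrite E eqxx.
  move=> /(@catl_inj _ (s :: p)) H2 /(@catl_inj _ (t :: q)) H3.
  have [M ->] := IH _ _ HK' H2 H3.
  by exists (false :: M); rewrite /= andbF.
have uc : u != c by rewrite E.
have [->|wc] := eqVneq w c; last first.
  rewrite !hom_cons /plug /= (negbTE uc) (negbTE vc) (negbTE wc).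
  case=> _ H2 [-> H3]; have [M ->] := IH _ _ HK' H2 H3.
  by exists (false :: M).
rewrite ![plug _ _ c]/plug eqxx.
move=> /(plug_slot uc sp) [F' EF H2] /(plug_slot vc tq) [G' EG H3].
have HK'' : hom (collapse c g) F' = hom (collapse c g) G'.
  move: HK; rewrite EF EG !hom_cat (hom_collapse_free _ cs) (hom_collapse_free _ ct).
  by rewrite /= spq => -[] /catl_inj.
have [M EM] := IH _ _ HK'' H2 H3.
by exists (true :: M); rewrite EG EM /= eqxx.
Qed.

End Decode.

End Templates.

Section RCPFunctions.

Variables (S : eqType) (f : seq S -> seq S).
Hypothesis fRCP : RCP f.
Implicit Types (m : S -> seq S) (tau : seq (option S)) (x y u v : seq S).

Lemma RCP_hom m u v : hom m u = hom m v -> hom m (f u) = hom m (f v).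
Proof. exact: fRCP (hom_monoid_morphism m) u v. Qed.

Lemma RCP_fill_transfer (c g : S) tau x y : g != c -> c \notin x -> c \notin y ->
  size x = size y -> f [:: c] = fill tau [:: c] -> f y = fill tau y ->
  f x = fill tau x.
Proof.
move=> gc cx cy sxy fc fy; apply: (collapse_plug_inj (y := x) gc).
  have Hxy : hom (collapse c g) x = hom (collapse c g) y.
    by rewrite !hom_collapse_free // sxy.
  by rewrite (RCP_hom Hxy) fy; apply: hom_fill_eq; rewrite Hxy.
have Hxc : hom (plug c x) x = hom (plug c x) [:: c].
  by rewrite hom_plug_free // hom_plug_hole.
by rewrite (RCP_hom Hxc) fc; apply: hom_fill_eq; rewrite Hxc.
Qed.

Variables (a b c : S).
Hypotheses (ab : a != b) (ac : a != c) (bc : b != c).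

Lemma RCP_mark_exists n :
  exists M, f (a :: nseq n b) = fill (mark c (f [:: c]) M) (a :: nseq n b).
Proof.
have cxa : c \notin a :: nseq n b.
  by rewrite inE mem_nseq negb_or eq_sym ac negb_and eq_sym bc orbT.
have cxb : c \notin b :: nseq n a.
  by rewrite inE mem_nseq negb_or eq_sym bc negb_and eq_sym ac orbT.
apply: (@decode_mark _ c a b a (nseq n a) (nseq n b) _ _ _ _ _ _ _ _
          (f (b :: nseq n a))) => //.
- by rewrite eq_sym.
- by rewrite mem_nseq negb_and eq_sym ab orbT.
- by rewrite mem_nseq negb_and ab orbT.
- by rewrite !size_nseq.
- by apply: RCP_hom; rewrite !hom_collapse_free //= !size_nseq.
- by apply: RCP_hom; rewrite hom_plug_free // hom_plug_hole.
- by apply: RCP_hom; rewrite hom_plug_free // hom_plug_hole.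
Qed.

Lemma RCP_fill_c_free_nonempty : exists tau, f [:: c] = fill tau [:: c] /\
  forall x, c \notin x -> 0 < size x -> f x = fill tau x.
Proof.
have [M1 fa] := RCP_mark_exists 0.
change (f [:: a] = fill (mark c (f [:: c]) M1) [:: a]) in fa.
exists (mark c (f [:: c]) M1); split=> [|x cx]; first by rewrite fill_mark_hole.
case: x cx => // t x cx _; have [Mn fxa] := RCP_mark_exists (size x).
have cxa : c \notin a :: nseq (size x) b.
  by rewrite inE mem_nseq negb_or eq_sym ac negb_and eq_sym bc orbT.
have sxa : size (t :: x) = size (a :: nseq (size x) b) by rewrite /= size_nseq.
rewrite (RCP_fill_transfer ac cx cxa sxa _ fxa) ?fill_mark_hole //.
congr fill; apply: mark_inj ab ac _ _; first by rewrite eq_sym.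
have Exa : hom (erase b) (a :: nseq (size x) b) = hom (erase b) [:: a].
  by rewrite hom_cons hom_erase_nseq hom1 cats0.
by rewrite -(hom_fill_eq _ Exa) -fxa -fa; apply: RCP_hom Exa.
Qed.

Section Extension.

Variable tau : seq (option S).
Hypothesis fc : f [:: c] = fill tau [:: c].
Hypothesis f_c_free : forall x, c \notin x -> 0 < size x -> f x = fill tau x.

Lemma RCP_fill_letter h : h \in [:: a; b; c] -> f [:: h] = fill tau [:: h].
Proof.
rewrite !inE => /or3P [] /eqP ->; rewrite ?fc // f_c_free // inE eq_sym ?ac ?bc //.
Qed.

(* Erasing a third letter h identifies [::] with [:: h], and does not affect
   the projection onto the two other letters. *)
Lemma RCP_fill_nil : f [::] = fill tau [::].
Proof.
apply: keep2_inj => d e; have [h habc /andP [hd he]] := avoid_two d e ab ac bc.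
rewrite -[LHS](hom_keep2_erase _ hd he) -[RHS](hom_keep2_erase _ hd he); congr hom.
have Eh : hom (erase h) [:: h] = hom (erase h) [::] by rewrite hom1 /erase eqxx.
by rewrite -(RCP_hom Eh) RCP_fill_letter // (hom_fill_eq _ Eh).
Qed.

Lemma RCP_fill_c_free x : c \notin x -> f x = fill tau x.
Proof. by case: x => [|t x] cx; [apply: RCP_fill_nil | apply: f_c_free]. Qed.

Lemma RCP_fill_avoid h x : h \in [:: a; b; c] -> h \notin x -> f x = fill tau x.
Proof.
have [-> _|hc habc hx] := eqVneq h c; first exact: RCP_fill_c_free.
set g := if h == a then b else a.
have [gh gc] : g != h /\ g != c.
  by rewrite /g; case: (eqVneq h a) => [->|ha]; split; rewrite // eq_sym.
have hg : h \notin nseq (size x) g by rewrite mem_nseq negb_and eq_sym gh orbT.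
apply: (RCP_fill_transfer gh hx hg); rewrite ?size_nseq ?RCP_fill_letter //.
by apply: RCP_fill_c_free; rewrite mem_nseq negb_and eq_sym gc orbT.
Qed.

Lemma RCP_fill x : f x = fill tau x.
Proof.
apply: keep2_inj => d e; have [h habc /andP [hd he]] := avoid_two d e ab ac bc.
have Ex : hom (keep2 d e) x = hom (keep2 d e) (hom (keep2 d e) x).
  by rewrite hom_keep2_idem.
rewrite (RCP_hom Ex) (hom_fill_eq _ Ex) (@RCP_fill_avoid h) //.
by apply/negP => /mem_hom_keep2; rewrite (negbTE hd) (negbTE he).
Qed.

End Extension.

Lemma RCP_fill_template : exists tau, forall x, f x = fill tau x.
Proof.
have [tau [fc f_c_free]] := RCP_fill_c_free_nonempty.
by exists tau; apply: RCP_fill.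
Qed.

End RCPFunctions.

Theorem mainTheorem3 (Sigma : finType) (hS : 3 <= #|Sigma|)
  (f : seq Sigma -> seq Sigma) :
  RCP f <->
  exists (n : nat) (w : nat -> seq Sigma),
    forall x : seq Sigma, f x = interleave (w 0) [seq w i.+1 | i <- iota 0 n] x.
Proof.
split=> [fRCP|[n [w fw]]]; last first.
  by move=> phi phi_mm u v Huv; rewrite !fw; apply: interleave_RCP.
have [a [b [c [ab ac bc]]]] := three_distinct hS.
have [tau ftau] := RCP_fill_template fRCP ab ac bc.
have [n [w Hw]] := fill_interleave tau.
by exists n, w => x; rewrite ftau Hw.
Qed.
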